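(* Let $n\ge2$, $\omega>0$, $G>0$, masses $m_1,\ldots,m_n>0$, pairwise distinct points $\vec R^0_1,\ldots,\vec R^0_n\in\mathbb{R}^3$ and unit vectors $\hat n_1,\ldots,\hat n_n\in\mathbb{R}^3$ be arbitrary, and let $g$ be the real symmetric $n\times n$ matrix $$g_{jj}=\sum_{\ell\ne j}\frac{Gm_\ell}{d_{j\ell}^3\,\omega}\big(1-3\cos^2\theta_{j\ell}\big),\qquad g_{jk}=-\frac{G\sqrt{m_jm_k}}{d_{jk}^3\,\omega}\big(\cos\varphi_{jk}+3\cos\theta_{jk}\cos\theta_{kj}\big)\ (j\ne k).$$ Then $$\|g\|_\infty\le\gamma\,\min\{6(n-1),\ C_1\ln(n-1)+C_2\},\qquad \gamma=\frac{Gm}{d^3\omega},$$ where $m:=\max_jm_j$, $d:=\min_{j\ne\ell}d_{j\ell}$, and $C_1,C_2$ are universal constants independent of $n$; one can take $C_1=288$, $C_2=966$.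
   Context: $\vec d_{jk}=\vec R^0_k-\vec R^0_j$, $d_{jk}=\|\vec d_{jk}\|$, $\hat d_{jk}=\vec d_{jk}/d_{jk}$; angles defined by $\cos\theta_{jk}=\hat n_j\cdot\hat d_{jk}$, $-\cos\theta_{kj}=\hat n_k\cdot\hat d_{jk}$, $\cos\varphi_{jk}=\hat n_j\cdot\hat n_k$. $\|\cdot\|_\infty$ denotes the operator norm. *)

From HB Require Import structures.
From mathcomp Require Import all_boot all_order all_algebra.
From mathcomp Require Import all_classical all_reals all_analysis.
Set Implicit Arguments. Unset Strict Implicit. Unset Printing Implicit Defensive.
Import Order.TTheory GRing.Theory Num.Theory.
Local Open Scope classical_set_scope.
Local Open Scope ring_scope.

Section Defs.
Variable R : realType.

Definition dot3 (u v : 'rV[R]_3) : R := \sum_(i < 3) u 0 i * v 0 i.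
Definition norm3 (u : 'rV[R]_3) : R := Num.sqrt (dot3 u u).

Definition enorm n (x : 'cV[R]_n) : R := Num.sqrt (\sum_(i < n) x i 0 ^+ 2).

Definition opnorm n (A : 'M[R]_n) : R :=
  sup [set enorm (A *m x) | x in [set x : 'cV[R]_n | enorm x <= 1]].

Variables (n : nat) (P : 'I_n -> 'rV[R]_3) (nh : 'I_n -> 'rV[R]_3).

Definition dvec (j k : 'I_n) : 'rV[R]_3 := P k - P j.
Definition dist (j k : 'I_n) : R := norm3 (dvec j k).
Definition dhat (j k : 'I_n) : 'rV[R]_3 := (dist j k)^-1 *: dvec j k.
(* cos theta_{jk} = n_j . dhat_{jk};  hence cos theta_{kj} = n_k . dhat_{kj}
   = - n_k . dhat_{jk}, as in the paper *)
Definition costheta (j k : 'I_n) : R := dot3 (nh j) (dhat j k).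
Definition cosphi (j k : 'I_n) : R := dot3 (nh j) (nh k).

Variables (G w : R) (m : 'I_n -> R).

Definition gmat : 'M[R]_n :=
  \matrix_(j, k)
    if j == k then
      \sum_(l < n | l != j)
         G * m l / (dist j l ^+ 3 * w) * (1 - 3 * costheta j l ^+ 2)
    else
      - (G * Num.sqrt (m j * m k) / (dist j k ^+ 3 * w))
        * (cosphi j k + 3 * costheta j k * costheta k j).

Definition mmax : R := sup [set r | exists j, r = m j].
Definition dmin : R := inf [set r | exists j l, j != l /\ r = dist j l].

Definition gamma : R := G * mmax / (dmin ^+ 3 * w).
End Defs.

From HB Require Import structures.
From mathcomp Require Import all_boot all_order all_algebra.
From mathcomp Require Import all_classical all_reals all_analysis.
From mathcomp.algebra_tactics Require Import ring lra.
From mathcomp.zify Require Import zify.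
Set Implicit Arguments.
Unset Strict Implicit.
Unset Printing Implicit Defensive.

Import Order.TTheory GRing.Theory Num.Theory.
Local Open Scope ring_scope.

(* Bounding each cosine by 1, every entry of g is at most c / d_jk^3, with c = G max m / omega,
   up to a factor 2 in each summand of the diagonal and 4 off the diagonal; so every absolute
   row sum of the symmetric matrix g is at most 6 gamma \sum_(l != j) (d / d_jl)^3, and the Schur
   test bounds the operator norm by the same quantity.  Each of the n - 1 terms is at most 1.
   For the logarithmic bound, tile space by cubes of side 0.577 d centred at R_j; their
   diameter is less than d, so each holds at most one point, and a ball of radius rho around
   R_j holds fewer than (2k + 1)^3 points, k ~ rho / (0.577 d).  Hence the N-th nearest
   neighbour of R_j is at distance >~ N^(1/3) d, and summing its contributions shell by shell
   of the grid gives \sum_(l != j) (d / d_jl)^3 <= 48 ln (n - 1) + 126. *)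

Section CauchySchwarz.
Variable R : rcfType.

Lemma sum_mul_sqr_le n (a b : 'I_n -> R) :
  (\sum_k a k * b k) ^+ 2 <= (\sum_k a k ^+ 2) * (\sum_k b k ^+ 2).
Proof.
have lagrange : \sum_k \sum_l (a k * b l - a l * b k) ^+ 2 =
    ((\sum_k a k ^+ 2) * (\sum_k b k ^+ 2) - (\sum_k a k * b k) ^+ 2) *+ 2.
  transitivity (\sum_k \sum_l
      (a k ^+ 2 * b l ^+ 2 + b k ^+ 2 * a l ^+ 2 - (a k * b k * (a l * b l)) *+ 2)).
    by apply: eq_bigr => k _; apply: eq_bigr => l _; ring.
  under eq_bigr => k _ do rewrite sumrB big_split sumrMnl /= -!mulr_sumr.
  rewrite sumrB big_split sumrMnl /= -!mulr_suml; ring.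
rewrite -subr_ge0 -(pmulrn_lge0 _ (ltn0Sn 1)) -lagrange.
by apply: sumr_ge0 => k _; apply: sumr_ge0 => l _; exact: sqr_ge0.
Qed.

Lemma sum_wmul_sqr_le n (a y : 'I_n -> R) : (forall k, 0 <= a k) ->
  (\sum_k a k * y k) ^+ 2 <= (\sum_k a k) * (\sum_k a k * y k ^+ 2).
Proof.
move=> a_ge0.
have := sum_mul_sqr_le (fun k => Num.sqrt (a k)) (fun k => Num.sqrt (a k) * y k).
have sqrtK k : Num.sqrt (a k) ^+ 2 = a k by rewrite sqr_sqrtr.
by under eq_bigr => k _ do rewrite mulrA -expr2 sqrtK;
   under [\sum_k (_ * y k) ^+ 2]eq_bigr => k _ do rewrite exprMn sqrtK;
   under [\sum_k _ ^+ 2]eq_bigr => k _ do rewrite sqrtK.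
Qed.

End CauchySchwarz.

Section SchurTest.
Variable R : realType.

Lemma opnorm_le_schur n (A : 'M[R]_n) (L : R) : 0 <= L ->
    (forall j, \sum_k `|A j k| <= L) -> (forall k, \sum_j `|A j k| <= L) ->
  opnorm A <= L.
Proof.
move=> L_ge0 rowL colL; apply: ge_sup.
  by exists (enorm (A *m 0)), 0; rewrite //= /enorm big1 ?sqrtr0 // => i _;
     rewrite mxE expr0n.
move=> _ [x /= x_le1 <-].
have S_le1 : \sum_k x k 0 ^+ 2 <= 1.
  by move: x_le1; rewrite /enorm -{1}sqrtr1 ler_sqrt.
have row_bound j : (A *m x) j 0 ^+ 2 <= L * \sum_k `|A j k| * x k 0 ^+ 2.
  rewrite mxE -real_normK ?num_real //.
  apply: le_trans (_ : (\sum_k `|A j k| * `|x k 0|) ^+ 2 <= _).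
    have sum_ge0 : 0 <= \sum_k `|A j k| * `|x k 0|.
      by apply: sumr_ge0 => k _; rewrite mulr_ge0.
    rewrite lerXn2r ?nnegrE //.
    by apply: (le_trans (ler_norm_sum _ _ _)); under eq_bigr do rewrite normrM.
  apply: le_trans (sum_wmul_sqr_le _ _) _ => //.
  under [X in _ * X]eq_bigr do rewrite real_normK ?num_real //.
  by rewrite ler_wpM2r ?rowL // sumr_ge0 // => k _; rewrite mulr_ge0 ?sqr_ge0.
rewrite /enorm -(ger0_norm L_ge0) -sqrtr_sqr ler_sqrt ?sqr_ge0 //.
apply: le_trans (ler_sum _ (fun j _ => row_bound j)) _.
rewrite -mulr_sumr exchange_big /= expr2 ler_wpM2l //.
under eq_bigr do rewrite -mulr_suml.
apply: le_trans (_ : \sum_k L * x k 0 ^+ 2 <= _).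
  by apply: ler_sum => k _; rewrite ler_wpM2r ?sqr_ge0 ?colL.
by rewrite -mulr_sumr -[leRHS]mulr1 ler_wpM2l.
Qed.

End SchurTest.

Section Euclid3.
Variable R : realType.
Implicit Types (u v : 'rV[R]_3) (c : R).

Lemma dot3_ge0 u : 0 <= dot3 u u.
Proof. by apply: sumr_ge0 => i _; rewrite -expr2 sqr_ge0. Qed.

Lemma norm3_gt0 u : u != 0 -> 0 < norm3 u.
Proof.
apply: contraNT; rewrite sqrtr_gt0 -leNgt => dot_le0.
have dot_eq0 : dot3 u u = 0 by apply/eqP; rewrite eq_le dot_le0 dot3_ge0.
apply/eqP/rowP => i; rewrite mxE; apply/eqP; rewrite -sqrf_eq0 expr2.
by apply/eqP; move/psumr_eq0P: dot_eq0 => -> // k _; rewrite -expr2 sqr_ge0.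
Qed.

Lemma norm3Z c u : norm3 (c *: u) = `|c| * norm3 u.
Proof.
rewrite /norm3 -sqrtr_sqr -sqrtrM ?sqr_ge0 // /dot3 mulr_sumr.
by congr Num.sqrt; apply: eq_bigr => i _; rewrite !mxE; ring.
Qed.

Lemma norm3N u : norm3 (- u) = norm3 u.
Proof. by rewrite -scaleN1r norm3Z normrN1 mul1r. Qed.

Lemma abs_coord_le_norm3 u i : `|u 0 i| <= norm3 u.
Proof.
rewrite -sqrtr_sqr ler_sqrt ?dot3_ge0 // /dot3 (bigD1 i) //= expr2 lerDl.
by apply: sumr_ge0 => k _; rewrite -expr2 sqr_ge0.
Qed.

Lemma abs_dot3_le u v : `|dot3 u v| <= norm3 u * norm3 v.
Proof.
rewrite -sqrtrM ?dot3_ge0 // -sqrtr_sqr ler_sqrt ?mulr_ge0 ?dot3_ge0 //.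
have sqr_sum w : dot3 w w = \sum_i w 0 i ^+ 2 by apply: eq_bigr => i _.
by rewrite !sqr_sum; exact: sum_mul_sqr_le.
Qed.

End Euclid3.

Section ShellWeights.
Variable R : realType.

Lemma exists_cube_gt N : exists k, (N < (2 * k + 1) ^ 3)%N.
Proof. by exists N; rewrite !expnS expn0; nia. Qed.

Definition cube_index N := ex_minn (exists_cube_gt N).

Lemma cube_index_gt N : (N < (2 * cube_index N + 1) ^ 3)%N.
Proof. by rewrite /cube_index; case: ex_minnP. Qed.

Lemma cube_index_min N k : (N < (2 * k + 1) ^ 3)%N -> (cube_index N <= k)%N.
Proof. by rewrite /cube_index; case: ex_minnP => c _; apply. Qed.

Lemma cube_index_eq K N : ((2 * K + 1) ^ 3 <= N < (2 * K + 3) ^ 3)%N ->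
  cube_index N = K.+1.
Proof.
move=> /andP[lowN highN]; apply/eqP; rewrite eqn_leq cube_index_min /=; last first.
  by rewrite (_ : 2 * K.+1 + 1 = 2 * K + 3)%N //; lia.
rewrite ltnNge; apply: contraL lowN => idx_leK; rewrite -ltnNge.
by apply: leq_trans (cube_index_gt N) _; rewrite leq_exp2r //; lia.
Qed.

(* Bound on (d / rho)^3 once the ball of radius rho reaches grid radius k >= 3, that is
   rho >= (k - 1/2) * 0.577 d; note (2000 / 577)^3 < 42. *)
Definition shell_weight k : R :=
  if (k <= 2)%N then 1 else 42 / (2 * k%:R - 1) ^+ 3.

Lemma shell_weight_ge0 k : 0 <= shell_weight k.
Proof.
rewrite /shell_weight; case: leqP => // k_gt2.
by rewrite divr_ge0 // exprn_ge0 // subr_ge0 -natrM ler1n; lia.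
Qed.

Lemma shell_weight_le1 k : shell_weight k <= 1.
Proof.
rewrite /shell_weight; case: leqP => // k_gt2.
have k_ge3 : (3 : R) <= k%:R by rewrite ler_nat.
rewrite ler_pdivrMr ?exprn_gt0 //; last lra.
have : 5 ^+ 3 <= (2 * k%:R - 1) ^+ 3 :> R by rewrite lerXn2r ?nnegrE //; lra.
lra.
Qed.

Lemma shell_weight_antimono : {homo shell_weight : k l / (k <= l)%N >-> l <= k}.
Proof.
move=> k l kl; rewrite {2}/shell_weight; case: leqP => [_|k_gt2].
  exact: shell_weight_le1.
rewrite /shell_weight ifN -?ltnNge; last exact: leq_trans kl.
have k_ge3 : (3 : R) <= k%:R by rewrite ler_nat.
have kl' : (k%:R : R) <= l%:R by rewrite ler_nat.
rewrite ler_wpM2l // lef_pV2 ?posrE ?exprn_gt0 //; try lra.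
by rewrite lerXn2r ?nnegrE //; lra.
Qed.

Definition weight_sum N : R := \sum_(0 <= r < N) shell_weight (cube_index r.+1).

Lemma weight_sum_mono : {homo weight_sum : N M / (N <= M)%N >-> N <= M}.
Proof.
move=> N M NM; rewrite /weight_sum (big_cat_nat (leq0n N) NM) /= lerDl.
by apply: sumr_ge0 => r _; exact: shell_weight_ge0.
Qed.

Lemma weight_sum_le N : weight_sum N <= N%:R.
Proof.
rewrite /weight_sum -[N in N%:R]subn0 -sumr_const_nat.
by apply: ler_sum => r _; exact: shell_weight_le1.
Qed.

Lemma ln_diff_ge (a b : R) : 0 < a -> 0 < b -> 1 - a / b <= ln b - ln a.
Proof.
move=> a_gt0 b_gt0; have ab_gt0 : 0 < a / b by rewrite divr_gt0.
have := @le_ln1Dx R (a / b - 1); rewrite (addrC 1) subrK ln_div ?posrE //.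
by rewrite ltrBrDr addNr => /(_ ab_gt0); lra.
Qed.

Lemma weight_sum_shell K : weight_sum ((2 * K + 5) ^ 3 - 1) =
  weight_sum ((2 * K + 3) ^ 3 - 1) +
  ((2 * K + 5) ^ 3 - (2 * K + 3) ^ 3)%:R * shell_weight K.+2.
Proof.
have le35 : ((2 * K + 3) ^ 3 <= (2 * K + 5) ^ 3)%N by rewrite leq_exp2r //; lia.
have pos3 : (0 < (2 * K + 3) ^ 3)%N by rewrite expn_gt0; lia.
rewrite /weight_sum (@big_cat_nat _ _ _ ((2 * K + 3) ^ 3 - 1)) /= ?leq0n //; last lia.
congr (_ + _); rewrite (eq_big_nat _ _ (F2 := fun=> shell_weight K.+2)).
  by rewrite sumr_const_nat mulr_natl; congr (_ *+ _); lia.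
move=> r /andP[r_lo r_hi]; rewrite (@cube_index_eq K.+1) //.
by apply/andP; split; lia.
Qed.

Lemma shell_mass_le K :
  ((2 * K + 5) ^ 3 - (2 * K + 3) ^ 3)%:R * shell_weight K.+2 <=
  288 / (2 * K + 3)%:R + 100 / ((K + 1)%:R * (K + 2)%:R) :> R.
Proof.
have -> : ((2 * K + 5) ^ 3 - (2 * K + 3) ^ 3 = 24 * (K + 2) ^ 2 + 2)%N.
  by rewrite !expnS expn0; nia.
rewrite /shell_weight -[K.+2]addn2 !(natrD, natrM, natrX).
case: leqP => [K_le0 | K_gt0].
  have -> : K = 0%N by lia.
  by rewrite mulr0n !(mulr0, add0r, mul1r, mulr1); lra.
have : 1 <= K%:R :> R by rewrite ler1n; lia.
move: (K%:R) => x x_ge1.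
rewrite -subr_ge0.
have -> : 288 / (2 * x + 3) + 100 / ((x + 1) * (x + 2)) -
    (24 * (x + 2) ^+ 2 + 2) * (42 / (2 * (x + 2) - 1) ^+ 3) =
    (144 * x ^+ 4 + 656 * x ^+ 3 + 636 * x ^+ 2 - 324 * x - 348) /
    ((2 * x + 3) ^+ 3 * ((x + 1) * (x + 2))).
  by field; apply/and3P; split; apply: lt0r_neq0; lra.
have x2 : x <= x ^+ 2 by rewrite expr2 ler_peMr //; lra.
have x3 : 1 <= x ^+ 3 by rewrite exprn_ege1.
apply: divr_ge0; first by have := exprn_ge0 4 (le_trans ler01 x_ge1); lra.
by rewrite !mulr_ge0 ?exprn_ge0 //; lra.
Qed.

(* The slack - 100 / (K + 1) telescopes the second term of shell_mass_le. *)
Lemma weight_sum_cube_le K : weight_sum ((2 * K + 3) ^ 3 - 1) <=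
  144 * ln (2 * K + 1)%:R + 126 - 100 / (K + 1)%:R.
Proof.
elim: K => [|K IH].
  rewrite /weight_sum (_ : (2 * 0 + 3) ^ 3 - 1 = 26)%N //.
  rewrite (eq_big_nat _ _ (F2 := fun=> 1)) => [|r /andP[_ r_lt]].
    by rewrite sumr_const_nat subn0 ln1 mulr0 add0r divr1; lra.
  by rewrite /shell_weight (@leq_trans 1) // cube_index_min.
rewrite (_ : 2 * K.+1 + 3 = 2 * K + 5)%N ?weight_sum_shell; last lia.
have shell := shell_mass_le K.
have gap : 1 - (2 * K + 1)%:R / (2 * K + 3)%:R <=
    ln (2 * K + 3)%:R - ln (2 * K + 1)%:R :> R.
  by apply: ln_diff_ge; rewrite ltr0n; lia.
rewrite (_ : 2 * K.+1 + 1 = 2 * K + 3)%N; last lia.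
rewrite (_ : K.+1 + 1 = K + 2)%N; last lia.
move: IH shell gap; rewrite !(natrD, natrM).
move: (K%:R) (ler0n R K) => x x_ge0 IH shell gap.
have gap_eq : 1 - (2 * x + 1) / (2 * x + 3) = 2 / (2 * x + 3).
  by field; apply: lt0r_neq0; lra.
have telescope : 100 / ((x + 1) * (x + 2)) = 100 / (x + 1) - 100 / (x + 2).
  by field; apply/andP; split; apply: lt0r_neq0; lra.
rewrite gap_eq in gap; rewrite telescope in shell.
lra.
Qed.

Lemma weight_sum_le_log N : (1 <= N)%N -> weight_sum N <= 48 * ln N%:R + 126.
Proof.
move=> N_ge1; have N_lt := cube_index_gt N; have idx_min := @cube_index_min N.
case: (cube_index N) N_lt idx_min => [|K] N_lt idx_min.
  by move: N_lt; rewrite exp1n; lia.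
have N_ge : ((2 * K + 1) ^ 3 <= N)%N by rewrite leqNgt; apply/negP => /idx_min; lia.
have K_pos : (0 : R) < (2 * K + 1)%:R by rewrite ltr0n; lia.
have N_le : (N <= (2 * K + 3) ^ 3 - 1)%N by lia.
apply: le_trans (weight_sum_mono N_le) _.
apply: le_trans (weight_sum_cube_le K) _.
have : 144 * ln (2 * K + 1)%:R <= 48 * ln N%:R :> R.
  have -> : 144 * ln (2 * K + 1)%:R = 48 * ln ((2 * K + 1)%:R ^+ 3) :> R.
    by rewrite lnXn // -mulr_natr; lra.
  by rewrite ler_pM2l // ler_ln ?posrE ?exprn_gt0 ?ltr0n // -?natrX ?ler_nat //; lia.
have : 0 <= 100 / (K + 1)%:R :> R by [].
lra.
Qed.

End ShellWeights.

Lemma floor_eq_absB_lt1 (R : archiFieldType) (x y : R) :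
  Num.floor x = Num.floor y -> `|x - y| < 1.
Proof.
move=> same_floor; have := floor_le x; have := floorD1_gt x.
have := floor_le y; have := floorD1_gt y.
rewrite same_floor intrD ltr_norml => *; apply/andP; split; lra.
Qed.

Section Packing.
Variables (R : realType) (n : nat) (P : 'I_n -> 'rV[R]_3) (d : R).
Hypotheses (d_gt0 : 0 < d) (dist_ge : forall l l', l != l' -> d <= dist P l l').

Lemma dist_self l : dist P l l = 0.
Proof. by rewrite /dist /dvec subrr -(scale0r (0 : 'rV[R]_3)) norm3Z normr0 mul0r. Qed.

Lemma dist_coord_le l l' i : `|P l' 0 i - P l 0 i| <= dist P l l'.
Proof. by have := abs_coord_le_norm3 (dvec P l l') i; rewrite /dvec !mxE. Qed.

(* 3 * 0.577^2 < 1: points whose coordinates all differ by at most side are closer than d. *)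
Definition side : R := 577 / 1000 * d.

Lemma side_gt0 : 0 < side.
Proof. by apply: mulr_gt0 _ d_gt0; lra. Qed.

Lemma dist_lt_of_coord_le l l' :
  (forall i : 'I_3, `|P l' 0 i - P l 0 i| <= side) -> dist P l l' < d.
Proof.
move=> close; have side_ge0 := ltW side_gt0.
have -> : d = Num.sqrt (d ^+ 2) by rewrite sqrtr_sqr gtr0_norm.
rewrite /dist /norm3 ltr_sqrt ?exprn_gt0 //.
apply: le_lt_trans (_ : _ <= \sum_(i < 3) side ^+ 2) _.
  apply: ler_sum => i _; rewrite /dvec !mxE -expr2 -real_normK ?num_real //.
  by rewrite lerXn2r ?nnegrE ?close.
rewrite sumr_const card_ord /side exprMn.
by have := exprn_gt0 2 d_gt0; lra.
Qed.

Section Cells.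
Variable j : 'I_n.

Definition cell l i : int := Num.floor ((P l 0 i - P j 0 i) / side + 2^-1).

Definition grid_radius (rho : R) : nat := Num.truncn (rho / side + 2^-1).

Lemma cell_inj l l' : (forall i, cell l i = cell l' i) -> l = l'.
Proof.
move=> same_cell; apply/eqP; apply: contraT => /dist_ge; rewrite leNgt => /negbTE <-.
apply: dist_lt_of_coord_le => i; have := floor_eq_absB_lt1 (same_cell i).
rewrite opprD addrACA subrr addr0 -mulrBl opprB addrA subrK normrM.
rewrite [`|side^-1|]gtr0_norm ?invr_gt0 ?side_gt0 // ltr_pdivrMr ?side_gt0 //.
by rewrite mul1r distrC => /ltW.
Qed.

Lemma cell_bounded l (rho : R) i : dist P j l <= rho ->
  (- (grid_radius rho)%:Z <= cell l i <= grid_radius rho)%R.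
Proof.
move=> near; have := le_trans (dist_coord_le j l i) near; rewrite ler_norml.
have := truncnS_gt (rho / side + 2^-1); rewrite -/(grid_radius rho).
move: (grid_radius rho) => K K_gt /andP[coord_lo coord_hi].
have side_inv : 0 < side^-1 by rewrite invr_gt0 side_gt0.
have lo : - rho / side <= (P l 0 i - P j 0 i) / side by rewrite ler_pM2r.
have hi : (P l 0 i - P j 0 i) / side <= rho / side by rewrite ler_pM2r.
rewrite mulNr in lo; rewrite /cell floor_ge_int -ltzD1 floor_lt_int.
rewrite intrN intrD -!pmulrn; apply/andP; split; rewrite ?natrS; lra.
Qed.

Lemma card_ball_lt (T : {set 'I_n}) (rho : R) : 0 <= rho -> j \notin T ->
    (forall l, l \in T -> dist P j l <= rho) ->
  (#|T| < (2 * grid_radius rho + 1) ^ 3)%N.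
Proof.
move=> rho_ge0 jNT near; set K := grid_radius rho.
have bounded l : l \in j |: T -> forall i, (- K%:Z <= cell l i <= K)%R.
  rewrite in_setU1 => /predU1P[-> | /near l_near] i; apply: cell_bounded => //.
  by rewrite dist_self.
pose code l := [ffun i => inord `|(cell l i + K%:Z)%R|%N : 'I_(2 * K).+1].
have code_inj : {in j |: T &, injective code}.
  move=> l l' /bounded bl /bounded bl' /ffunP same; apply: cell_inj => i.
  have := congr1 val (same i); rewrite !ffunE /= !inordK.
  - by have := bl i; have := bl' i; lia.
  - by have := bl' i; lia.
  - by have := bl i; lia.
have := max_card (code @: (j |: T)).
by rewrite (card_in_imset code_inj) cardsU1 jNT card_ffun !card_ord addn1.
Qed.

Lemma cube_ratio_le (rho : R) :
  d <= rho -> (d / rho) ^+ 3 <= shell_weight R (grid_radius rho).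
Proof.
move=> d_le_rho; have rho_gt0 := lt_le_trans d_gt0 d_le_rho.
have ratio_ge0 : 0 <= d / rho by rewrite divr_ge0 ?ltW.
rewrite /shell_weight; case: leqP => [_ | K_gt2].
  by rewrite exprn_ile1 // ler_pdivrMr // mul1r.
have K_ge3 : 3 <= (grid_radius rho)%:R :> R by rewrite ler_nat.
have K_le : (grid_radius rho)%:R <= rho / side + 2^-1.
  have : 0 <= rho / side by rewrite divr_ge0 ?ltW ?side_gt0.
  by rewrite truncn_le; lra.
move: (grid_radius rho) K_ge3 K_le => K K_ge3 K_le.
have radius : (K%:R - 2^-1) * side <= rho.
  by rewrite -ler_pdivlMr; [lra | exact: side_gt0].
have scaled : d / rho * (2 * K%:R - 1) <= 2000 / 577.
  by rewrite mulrAC ler_pdivrMr //; move: radius; rewrite /side; lra.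
have cube : (d / rho * (2 * K%:R - 1)) ^+ 3 <= (2000 / 577) ^+ 3.
  rewrite lerXn2r ?nnegrE; [by [] | by rewrite mulr_ge0 //; lra | lra | exact: scaled].
have const : (2000 / 577) ^+ 3 <= 42 :> R by rewrite !exprS expr0 !mulr1; lra.
rewrite ler_pdivlMr -?exprMn; first lra.
by rewrite exprn_gt0 //; lra.
Qed.

End Cells.

(* The farthest point of T has all of j |: T in its ball, so its term is bounded by the
   weight of index #|T|. *)
Lemma sum_cube_ratio_le j (T : {set 'I_n}) : j \notin T ->
  \sum_(l in T) (d / dist P j l) ^+ 3 <= weight_sum R #|T|.
Proof.
move card_T : #|T| => N; elim: N T card_T => [|N IH] T card_T jNT.
  move/eqP: card_T; rewrite cards_eq0 => /eqP ->.
  by rewrite big_set0 /weight_sum big_geq.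
have [l0 l0T] : exists l0, l0 \in T by apply/set0Pn; rewrite -card_gt0 card_T.
have [far farT_ far_max] := @arg_maxP _ _ _ l0 (mem T) (dist P j) l0T.
have farT : far \in T := farT_.
rewrite (big_setD1 far farT) /= /weight_sum big_nat_recr //= addrC.
apply: lerD; first apply: IH.
- by have := cardsD1 far T; rewrite farT card_T add1n => -[].
- by rewrite in_setD1 negb_and jNT orbT.
have j_far : j != far by apply: contraNneq jNT => ->.
have d_le := dist_ge j_far.
apply: le_trans (cube_ratio_le d_le) _; apply: shell_weight_antimono.
by rewrite cube_index_min // -card_T (@card_ball_lt j) ?(le_trans (ltW d_gt0)).
Qed.

End Packing.

Section Configuration.
Variables (R : realType) (n : nat) (P nh : 'I_n -> 'rV[R]_3).

Lemma dist_sym j k : dist P j k = dist P k j.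
Proof. by rewrite /dist /dvec -opprB norm3N. Qed.

Lemma cosphi_sym j k : cosphi nh j k = cosphi nh k j.
Proof. by apply: eq_bigr => i _; rewrite mulrC. Qed.

Hypothesis P_inj : forall j k, j != k -> P j != P k.
Hypothesis nh_unit : forall j, norm3 (nh j) = 1.

Lemma dist_gt0 j k : j != k -> 0 < dist P j k.
Proof. by move=> jk; rewrite norm3_gt0 // /dvec subr_eq0 eq_sym P_inj. Qed.

Lemma norm3_dhat j k : j != k -> norm3 (dhat P j k) = 1.
Proof.
move=> jk; rewrite norm3Z -/(dist P j k) gtr0_norm ?invr_gt0 ?dist_gt0 //.
by rewrite mulVf // gt_eqF ?dist_gt0.
Qed.

Lemma abs_costheta_le1 j k : j != k -> `|costheta P nh j k| <= 1.
Proof. by move=> jk; rewrite -(mulr1 1) -{1}(nh_unit j) -(norm3_dhat jk) abs_dot3_le. Qed.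

Lemma abs_cosphi_le1 j k : `|cosphi nh j k| <= 1.
Proof. by rewrite -(mulr1 1) -{1}(nh_unit j) -(nh_unit k) abs_dot3_le. Qed.

End Configuration.

Section Extrema.
Variables (R : realType) (n : nat).
Local Open Scope classical_set_scope.

Lemma le_mmax (m : 'I_n -> R) j : m j <= mmax m.
Proof.
apply: sup_upper_bound; last by exists j.
split; first by exists (m j), j.
exists (\sum_k `|m k|) => _ [k ->].
by rewrite (le_trans (ler_norm _)) // (bigD1 k) //= lerDl sumr_ge0.
Qed.

Lemma mmax_gt0 (m : 'I_n -> R) : (0 < n)%N -> (forall j, 0 < m j) -> 0 < mmax m.
Proof. by move=> n_gt0 m_gt0; apply: lt_le_trans (m_gt0 (Ordinal n_gt0)) (le_mmax _ _). Qed.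

Variable P : 'I_n -> 'rV[R]_3.

Lemma dmin_le_dist j l : j != l -> dmin P <= dist P j l.
Proof.
move=> jl; apply: ge_inf; last by exists j, l.
by exists 0 => _ [j' [l' [_ ->]]]; exact: sqrtr_ge0.
Qed.

Lemma dmin_gt0 : (2 <= n)%N -> (forall j k, j != k -> P j != P k) -> 0 < dmin P.
Proof.
move=> n_ge2 P_inj; pose i0 : 'I_n := Ordinal (ltnW n_ge2).
pose i1 : 'I_n := Ordinal n_ge2; have i01 : i0 != i1 by [].
have [[j l] /= jl closest] := @arg_minP _ _ _ (i0, i1)
  (fun p : 'I_n * 'I_n => p.1 != p.2) (fun p => dist P p.1 p.2) i01.
apply: lt_le_trans (dist_gt0 P_inj jl) _.
apply: lb_le_inf; first by exists (dist P i0 i1), i0, i1.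
by move=> _ [j' [l' [jl' ->]]]; exact: (closest (j', l')).
Qed.

End Extrema.

Lemma abs_1_sub_3sqr_le (R : realFieldType) (x : R) :
  `|x| <= 1 -> `|1 - 3 * x ^+ 2| <= 2.
Proof.
move=> x_le1; have : x ^+ 2 <= 1 by rewrite -real_normK ?num_real // expr_le1.
by have := sqr_ge0 x; rewrite ler_norml; lra.
Qed.

Lemma abs_add_3mul_le (R : realFieldType) (a b c : R) :
  `|a| <= 1 -> `|b| <= 1 -> `|c| <= 1 -> `|a + 3 * b * c| <= 4.
Proof.
move=> a_le1 b_le1 c_le1; rewrite (le_trans (ler_normD _ _)) // -mulrA normrM.
have : `|b * c| <= 1 by rewrite normrM mulr_ile1.
by rewrite ger0_norm //; lra.
Qed.

Section Entries.
Variables (R : realType) (n : nat) (w G : R) (m : 'I_n -> R).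
Variables (P nh : 'I_n -> 'rV[R]_3).
Hypotheses (w_gt0 : 0 < w) (G_gt0 : 0 < G) (m_gt0 : forall j, 0 < m j).
Hypotheses (P_inj : forall j k, j != k -> P j != P k).
Hypothesis nh_unit : forall j, norm3 (nh j) = 1.

Local Notation g := (gmat P nh G w m).

Definition coupling : R := G * mmax m / w.

Lemma gmat_sym j k : g j k = g k j.
Proof.
rewrite !mxE eq_sym; case: eqVneq => [-> // | _].
by rewrite (dist_sym P j k) (cosphi_sym nh j k) (mulrC (m j)); ring.
Qed.

Lemma coupling_bound (a D : R) : 0 < D -> 0 <= a <= mmax m ->
  G * a / (D * w) <= coupling / D.
Proof.
move=> D_gt0 /andP[a_ge0 a_le].
have -> : G * a / (D * w) = G * a / w / D.
  by field; apply/andP; split; apply: lt0r_neq0.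
by rewrite ler_pM2r ?invr_gt0 // ler_pM2r ?invr_gt0 // ler_pM2l.
Qed.

Lemma abs_gmat_diag_le j :
  `|g j j| <= \sum_(l < n | l != j) 2 * coupling / dist P j l ^+ 3.
Proof.
rewrite mxE eqxx (le_trans (ler_norm_sum _ _ _)) // ler_sum // => l lj.
have D_gt0 : 0 < dist P j l ^+ 3 by rewrite exprn_gt0 // dist_gt0 // eq_sym.
rewrite normrM (_ : 2 * _ / _ = coupling / dist P j l ^+ 3 * 2); last by ring.
apply: ler_pM; rewrite ?normr_ge0 //; last first.
  by rewrite abs_1_sub_3sqr_le // abs_costheta_le1 // eq_sym.
have m_l := m_gt0 l.
rewrite ger0_norm; last by apply: divr_ge0; apply: mulr_ge0; apply: ltW.
by apply: coupling_bound => //; rewrite ltW //= le_mmax.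
Qed.

Lemma abs_gmat_le j k : j != k -> `|g j k| <= 4 * coupling / dist P j k ^+ 3.
Proof.
move=> jk; have D_gt0 : 0 < dist P j k ^+ 3 by rewrite exprn_gt0 // dist_gt0.
rewrite mxE (negbTE jk) normrM normrN.
rewrite (_ : 4 * _ / _ = coupling / dist P j k ^+ 3 * 4); last by ring.
apply: ler_pM; rewrite ?normr_ge0 //; last first.
  by rewrite abs_add_3mul_le ?abs_cosphi_le1 ?abs_costheta_le1 // eq_sym.
have sqrt_ge0 := sqrtr_ge0 (m j * m k).
rewrite ger0_norm; last by apply: divr_ge0; apply: mulr_ge0 => //; apply: ltW.
apply: coupling_bound => //; rewrite sqrtr_ge0 /=.
rewrite -(ger0_norm (le_trans (ltW (m_gt0 j)) (le_mmax m j))) -sqrtr_sqr.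
rewrite ler_sqrt ?sqr_ge0 // expr2.
by apply: ler_pM; rewrite ?le_mmax // ltW.
Qed.

Lemma sum_abs_gmat_le j :
  \sum_k `|g j k| <= 6 * coupling * \sum_(l < n | l != j) (dist P j l ^+ 3)^-1.
Proof.
have off_diag : \sum_(k < n | k != j) `|g j k| <=
    \sum_(k < n | k != j) 4 * coupling / dist P j k ^+ 3.
  by apply: ler_sum => k kj; rewrite abs_gmat_le // eq_sym.
rewrite (bigD1 j) //=; apply: le_trans (lerD (abs_gmat_diag_le j) off_diag) _.
rewrite -big_split mulr_sumr le_eqVlt; apply/orP; left; apply/eqP.
by apply: eq_bigr => k _ /=; ring.
Qed.

Hypothesis n_ge2 : (2 <= n)%N.

Lemma gamma_gt0 : 0 < gamma P G w m.
Proof.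
have m_max := mmax_gt0 (ltnW n_ge2) m_gt0.
by rewrite divr_gt0 ?mulr_gt0 ?exprn_gt0 ?dmin_gt0.
Qed.

Lemma sum_abs_gmat_le_gamma j :
  \sum_k `|g j k| <= 6 * gamma P G w m * weight_sum R (n - 1).
Proof.
have dmin_pos := dmin_gt0 n_ge2 P_inj.
have ratio : \sum_(l < n | l != j) (dmin P / dist P j l) ^+ 3 <= weight_sum R (n - 1).
  have card_C1 : #|[set~ j]| = (n - 1)%N by rewrite cardsC1 card_ord subn1.
  have -> : \sum_(l < n | l != j) (dmin P / dist P j l) ^+ 3 =
      \sum_(l in [set~ j]) (dmin P / dist P j l) ^+ 3.
    by apply: eq_bigl => l; rewrite in_setC1.
  rewrite -card_C1; apply: sum_cube_ratio_le dmin_pos _ _ _ _.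
    exact: dmin_le_dist.
  by rewrite in_setC1 eqxx.
rewrite (_ : \sum_(l < n | l != j) _ =
    dmin P ^+ 3 * \sum_(l < n | l != j) (dist P j l ^+ 3)^-1) in ratio; last first.
  by rewrite mulr_sumr; apply: eq_bigr => l _; rewrite expr_div_n.
apply: le_trans (sum_abs_gmat_le j) _.
set S := \sum_(l < n | l != j) _ in ratio *.
rewrite (_ : 6 * coupling * S = 6 * gamma P G w m * (dmin P ^+ 3 * S)).
  by rewrite ler_wpM2l // mulr_ge0 // ltW // gamma_gt0.
rewrite /gamma /coupling; field.
by apply/andP; split; apply: lt0r_neq0; rewrite // exprn_gt0.
Qed.

End Entries.

Theorem proposition2 (R : realType) (n : nat) (w G : R)
  (m : 'I_n -> R) (P nh : 'I_n -> 'rV[R]_3) :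
  (2 <= n)%N -> 0 < w -> 0 < G -> (forall j, 0 < m j) ->
  (forall j k, j != k -> P j != P k) ->
  (forall j, norm3 (nh j) = 1) ->
  opnorm (gmat P nh G w m) <=
    gamma P G w m * Num.min (6 * (n - 1)%:R)
                            (288 * ln ((n - 1)%:R) + 966).
Proof.
move=> n_ge2 w_gt0 G_gt0 m_gt0 P_inj nh_unit.
have gamma_pos := gamma_gt0 w_gt0 G_gt0 m_gt0 P_inj n_ge2.
set bound := Num.min _ _.
have weight_le : 6 * weight_sum R (n - 1) <= bound.
  have W_le := weight_sum_le R (n - 1).
  have W_log : weight_sum R (n - 1) <= 48 * ln (n - 1)%:R + 126.
    by apply: weight_sum_le_log; lia.
  by rewrite le_min; apply/andP; split; lra.
have row_le j : \sum_k `|gmat P nh G w m j k| <= gamma P G w m * bound.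
  apply: le_trans (sum_abs_gmat_le_gamma w_gt0 G_gt0 m_gt0 P_inj nh_unit n_ge2 j) _.
  by rewrite mulrAC mulrC ler_wpM2l // ltW.
apply: opnorm_le_schur => [|//|k].
  by apply: le_trans (row_le (Ordinal (ltnW n_ge2))); exact: sumr_ge0.
by under eq_bigr do rewrite gmat_sym; exact: row_le.
Qed.
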